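(* Let $\overline{\mathsf{M}}_s$ be a fine saturated sharp monoid, $r$ a positive integer, and let $\mathfrak X_s$, $\mathfrak X_{s_r}$, $V\subseteq V_r$, $\mathsf{PL}_r$ and $\nabla$ be as in the context. Let $\delta\in\mathbb Z^{V_r}$ be a divisor on $\mathfrak X_{s_r}$ supported on $V$, let $D\in\mathbb Z^{V_r}$ be a divisor on $\mathfrak X_{s_r}$, and let $\alpha\in\mathsf{PL}_r$ satisfy $rD=\delta+\nabla\alpha$. Then there exists $\beta\in\mathsf{PL}_r$ such that $\alpha+r\beta$ is constant on $V\subseteq V_r$.
   Context: $\mathfrak X_s$ is a finite connected graph (loops and multiple edges allowed) with vertex set $V$, each edge $e$ having a length $\ell(e)\in\overline{\mathsf{M}}_s\setminus\{0\}$. Let $\overline{\mathsf{M}}_{s_r}=\tfrac1r\overline{\mathsf{M}}_s\subseteq\overline{\mathsf{M}}_s^{\mathsf{gp}}\otimes\mathbb Q$ (an $r$-th root adjoined to every element). $\mathfrak X_{s_r}$ is the graph obtained by subdividing each edge $e$ of $\mathfrak X_s$ into a chain of exactly $r$ edges, each of length $\ell(e)/r\in\overline{\mathsf{M}}_{s_r}$; its vertex set is $V_r\supseteq V$. $\mathsf{PL}_r$ is the group of functions $\alpha\colon V_r\to\overline{\mathsf{M}}_{s_r}^{\mathsf{gp}}$ with integer slopes: for each edge of $\mathfrak X_{s_r}$ of length $\lambda$ from $u$ to $u'$ there is $k\in\mathbb Z$ (the slope) with $\alpha(u')-\alpha(u)=k\lambda$. Divisors on $\mathfrak X_{s_r}$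 are elements of $\mathbb Z^{V_r}$, and $\nabla\alpha(v)$ is the sum of the outgoing slopes of $\alpha$ along all half-edges at $v$. *)

From HB Require Import structures.
From mathcomp Require Import all_boot all_order all_algebra.
Set Implicit Arguments. Unset Strict Implicit. Unset Printing Implicit Defensive.
Import Order.TTheory GRing.Theory Num.Theory.
Local Open Scope ring_scope.

(** A fine saturated sharp monoid is modelled (up to isomorphism)
    as a submonoid [M] of the lattice [Z^n] ('rV[int]_n): its groupification is
    then the subgroup [gp M] of differences, and [M^gp (x) Q] embeds in [Q^n]. *)

Definition monoid_gp n (M : 'rV[int]_n -> Prop) (x : 'rV[int]_n) : Prop :=
  exists a b, M a /\ M b /\ x = a - b.

Definition is_submonoid n (M : 'rV[int]_n -> Prop) : Prop :=
  M 0 /\ (forall x y, M x -> M y -> M (x + y)).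

(* fine = finitely generated and integral (integrality is automatic in Z^n) *)
Definition is_fine n (M : 'rV[int]_n -> Prop) : Prop :=
  is_submonoid M /\
  exists gens : seq 'rV[int]_n, (forall g, g \in gens -> M g) /\
    forall x, M x -> exists c : 'I_(size gens) -> nat,
      x = \sum_(i < size gens) gens`_i *+ c i.

Definition is_saturated n (M : 'rV[int]_n -> Prop) : Prop :=
  forall x (k : nat), monoid_gp M x -> (0 < k)%N -> M (x *+ k) -> M x.

Definition is_sharp n (M : 'rV[int]_n -> Prop) : Prop :=
  forall x, M x -> M (- x) -> x = 0.

Definition fs_sharp_monoid n (M : 'rV[int]_n -> Prop) : Prop :=
  [/\ is_fine M, is_saturated M & is_sharp M].

Definition embQ n (m : 'rV[int]_n) : 'rV[rat]_n := map_mx (fun z : int => z%:~R) m.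

(* membership in M_{s_r}^gp = (1/r) M^gp, inside Q^n *)
Definition in_Mr_gp n (M : 'rV[int]_n -> Prop) (r : nat) (x : 'rV[rat]_n) : Prop :=
  exists m, monoid_gp M m /\ r%:R *: x = embQ m.

Definition graph_adj (V E : finType) (src tgt : E -> V) : rel V :=
  fun x y => [exists e, ((src e == x) && (tgt e == y)) || ((src e == y) && (tgt e == x))].

Definition graph_connected (V E : finType) (src tgt : E -> V) : Prop :=
  forall x y : V, connect (graph_adj src tgt) x y.

(** Vertices: V_r = V + E * 'I_(r-1), where [inr (e, j)] is the (j+1)-th interior
    subdivision point of edge e.  Edges: E * 'I_r, the edge [(e, i)] goes from
    the i-th to the (i+1)-th point of the chain of e (point 0 = src e,
    point r = tgt e), with length l(e)/r. *)

Definition sub_vert (V E : finType) (r : nat) : finType := (V + (E * 'I_r.-1))%type.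

Definition chain_pt (V E : finType) (src tgt : E -> V) (r : nat) (e : E) (k : nat)
  : sub_vert V E r :=
  if k is k'.+1 then
    (if (insub k' : option 'I_r.-1) is Some j then inr (e, j) else inl (tgt e))
  else inl (src e).

Definition sub_src (V E : finType) (src tgt : E -> V) (r : nat) (ed : E * 'I_r)
  : sub_vert V E r := chain_pt src tgt r ed.1 ed.2.
Definition sub_tgt (V E : finType) (src tgt : E -> V) (r : nat) (ed : E * 'I_r)
  : sub_vert V E r := chain_pt src tgt r ed.1 ed.2.+1.

Definition sub_len n (E : finType) (len : E -> 'rV[int]_n) (r : nat) (ed : E * 'I_r)
  : 'rV[rat]_n := r%:R^-1 *: embQ (len ed.1).

Definition is_PL n (M : 'rV[int]_n -> Prop) (V E : finType) (src tgt : E -> V)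
  (len : E -> 'rV[int]_n) (r : nat) (alpha : sub_vert V E r -> 'rV[rat]_n) : Prop :=
  (forall v, in_Mr_gp M r (alpha v)) /\
  forall ed : E * 'I_r, exists k : int,
    alpha (sub_tgt src tgt ed) - alpha (sub_src src tgt ed) = k%:~R *: sub_len len ed.

(* The slope of alpha along an edge of length lam (lam <> 0): the unique k with
   Delta = k * lam, read off on the first nonzero coordinate of lam. *)
Definition slope_of n (Delta lam : 'rV[rat]_n) : rat :=
  if [pick j : 'I_n | lam 0 j != 0] is Some j then Delta 0 j / lam 0 j else 0.

Definition edge_slope n (V E : finType) (src tgt : E -> V) (len : E -> 'rV[int]_n)
  (r : nat) (alpha : sub_vert V E r -> 'rV[rat]_n) (ed : E * 'I_r) : rat :=
  slope_of (alpha (sub_tgt src tgt ed) - alpha (sub_src src tgt ed)) (sub_len len ed).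

(* nabla alpha (v) = sum of outgoing slopes along all half-edges at v
   (an edge from u to u' with slope k has outgoing slope k at u, -k at u';
   a loop thus contributes k - k = 0). *)
Definition nabla n (V E : finType) (src tgt : E -> V) (len : E -> 'rV[int]_n)
  (r : nat) (alpha : sub_vert V E r -> 'rV[rat]_n) (v : sub_vert V E r) : rat :=
  \sum_(ed : E * 'I_r | sub_src src tgt ed == v) edge_slope src tgt len alpha ed
  - \sum_(ed : E * 'I_r | sub_tgt src tgt ed == v) edge_slope src tgt len alpha ed.

From HB Require Import structures.
From mathcomp Require Import all_boot all_order all_algebra.
Set Implicit Arguments. Unset Strict Implicit. Unset Printing Implicit Defensive.
Import GRing.Theory Num.Theory.
Local Open Scope ring_scope.

(* Let [k_(e,i)] be the slope of [alpha] on the [i]-th piece of the subdivided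
   edge [e].  Since [delta] vanishes at the interior points of [e], there
   [r D = nabla alpha = k_(e,i+1) - k_(e,i)], so all the [k_(e,i)] are congruent
   mod [r] and [r] divides their sum.  Summing along the chain,
   [alpha (tgt e) - alpha (src e) = (sum_i k_(e,i)) l(e) / r] is an integer
   multiple of [l(e)], hence lies in [M^gp], and by connectedness so does every
   [alpha v0 - alpha v] with [v, v0] in [V].  Then [beta := (alpha v0 - alpha v) / r]
   on [V], extended along each chain by its value at the target, is in [PL_r]
   and [alpha + r beta = alpha v0] on [V]. *)

HB.instance Definition _ (n : nat) :=
  GRing.isNmodMorphism.Build 'rV[int]_n 'rV[rat]_n (@embQ n)
    (map_mx0 _ _ _, @map_mxD _ _ _ _ _).

Lemma embQ_inj n : injective (@embQ n).
Proof.
by move=> a b /rowP eq_ab; apply/rowP => j; have := eq_ab j; rewrite !mxE => /intr_inj.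
Qed.

Lemma embQMz n (a : 'rV[int]_n) (t : int) : embQ (a *~ t) = t%:~R *: embQ a.
Proof. by rewrite scaler_int; apply: raddfMz. Qed.

Definition in_Mgp n (M : 'rV[int]_n -> Prop) (x : 'rV[rat]_n) : Prop :=
  exists m, monoid_gp M m /\ x = embQ m.

Section MonoidGroupification.
Variables (n : nat) (M : 'rV[int]_n -> Prop).
Hypothesis M_submonoid : is_submonoid M.

Lemma monoid_gp0 : monoid_gp M 0.
Proof. by exists 0, 0; rewrite subr0; case: M_submonoid. Qed.

Lemma monoid_gpB x y : monoid_gp M x -> monoid_gp M y -> monoid_gp M (x - y).
Proof.
case: M_submonoid => _ MD [a [b [Ma [Mb ->]]]] [c [d [Mc [Md ->]]]].
exists (a + d), (b + c); split; [exact: MD | split; first exact: MD].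
by rewrite opprB opprD addrACA addrC.
Qed.

Lemma submonoid_mulrn x m : M x -> M (x *+ m).
Proof.
case: M_submonoid => M0 MD Mx.
by elim: m => [|m IHm]; rewrite ?mulr0n // mulrS; apply: MD.
Qed.

Lemma monoid_gpMz x t : M x -> monoid_gp M (x *~ t).
Proof.
case: M_submonoid => M0 _ Mx; case: t => m.
  by exists (x *+ m), 0; rewrite subr0; split=> //; apply: submonoid_mulrn.
exists 0, (x *+ m.+1); rewrite NegzE mulrNz sub0r.
by split=> //; split=> //; apply: submonoid_mulrn.
Qed.

Lemma in_Mgp0 : in_Mgp M 0.
Proof. by exists 0; rewrite raddf0; split=> //; apply: monoid_gp0. Qed.

Lemma in_MgpB x y : in_Mgp M x -> in_Mgp M y -> in_Mgp M (x - y).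
Proof.
move=> [a [gp_a ->]] [b [gp_b ->]].
by exists (a - b); rewrite raddfB; split=> //; apply: monoid_gpB.
Qed.

Lemma in_Mgp_Mz x t : M x -> in_Mgp M (embQ (x *~ t)).
Proof. by exists (x *~ t); split=> //; apply: monoid_gpMz. Qed.

End MonoidGroupification.

Lemma dvdz_sum_congr_steps (m : nat) (k : nat -> int) :
  (forall i, (i.+1 < m)%N -> (m %| k i.+1 - k i)%Z) -> (m %| \sum_(i < m) k i)%Z.
Proof.
move=> dvd_step.
have dvd_from0 i : (i < m)%N -> (m %| k i - k 0%N)%Z.
  elim: i => [|i IHi] lt_im; first by rewrite subrr dvdz0.
  rewrite -[k i.+1](subrK (k i)) -addrA.
  by rewrite rpredD ?dvd_step ?IHi // ltnW.
have -> : \sum_(i < m) k i = \sum_(i < m) (k i - k 0%N) + m%:Z * k 0%N.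
  by rewrite sumrB sumr_const card_ord -mulr_natl natz subrK.
by rewrite rpredD ?dvdz_mulr // rpred_sum // => i _; apply: dvd_from0.
Qed.

Lemma connect_diff_closed (T E : finType) (src tgt : E -> T) (G : zmodType)
    (S : G -> Prop) (f : T -> G) :
  S 0 -> (forall x y, S x -> S y -> S (x - y)) ->
  (forall e, S (f (tgt e) - f (src e))) ->
  forall u v, connect (graph_adj src tgt) u v -> S (f u - f v).
Proof.
move=> S0 SB S_edge u _ /connectP[p adj_p ->].
have SN x : S x -> S (- x) by move=> Sx; rewrite -sub0r; apply: SB.
elim: p u adj_p => [|w p IHp] u /=; first by rewrite subrr.
case/andP=> adj_uw /IHp S_wp.
have -> : f u - f (last w p) = (f u - f w) - (f (last w p) - f w).
  by rewrite opprB addrA subrK.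
apply: SB; last by rewrite -opprB; apply: SN.
case/existsP: adj_uw => e /orP[] /andP[/eqP src_e /eqP tgt_e].
  by rewrite -opprB -src_e -tgt_e; apply: SN.
by rewrite -src_e -tgt_e.
Qed.

Lemma connected_diff_in_Mgp n (M : 'rV[int]_n -> Prop) (V E : finType)
    (src tgt : E -> V) (len : E -> 'rV[int]_n) (a : V -> 'rV[rat]_n) :
  is_submonoid M -> (forall e, M (len e)) -> graph_connected src tgt ->
  (forall e, exists t : int, a (tgt e) - a (src e) = embQ (len e *~ t)) ->
  forall u v, in_Mgp M (a u - a v).
Proof.
move=> M_sub len_M connected incr u v.
apply: connect_diff_closed (connected u v) => [||e]; first exact: in_Mgp0.
  exact: in_MgpB.
by have [t ->] := incr e; apply: in_Mgp_Mz.
Qed.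

Section SubdividedGraph.
Variables (n : nat) (V E : finType) (src tgt : E -> V) (len : E -> 'rV[int]_n).
Variable r' : nat.
Local Notation r := r'.+1.
Local Notation chain := (chain_pt src tgt r).

Lemma chain_pt_last e : chain e r = inl (tgt e).
Proof. by rewrite /chain_pt insubN ?ltnn. Qed.

Lemma chain_pt_eq_inr e' i e j : (chain e' i == inr (e, j)) = (e' == e) && (i == j.+1).
Proof.
case: i => [|i]; first by rewrite andbF.
rewrite /= eqSS; case: (@insubP _ _ 'I_r' i) => [i' _ <- | ge_ir]; last first.
  have /negbTE-> : i != j by apply: contraNneq ge_ir => ->.
  by rewrite andbF.
by apply/eqP/andP => [[-> ->] | [/eqP-> /eqP/val_inj->]].
Qed.

Lemma r_neq0 : (r%:R : rat) != 0.
Proof. by rewrite pnatr_eq0. Qed.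

Section Slopes.
Variables (alpha : sub_vert V E r -> 'rV[rat]_n) (k : E * 'I_r -> int).
Hypothesis alpha_slopes : forall ed,
  alpha (sub_tgt src tgt ed) - alpha (sub_src src tgt ed) = (k ed)%:~R *: sub_len len ed.
Hypothesis len_neq0 : forall e, len e != 0.

Lemma edge_slopeE ed : edge_slope src tgt len alpha ed = (k ed)%:~R.
Proof.
rewrite /edge_slope alpha_slopes /slope_of; case: pickP => [j lam_j|lam0].
  by rewrite mxE mulfK.
have /eqP : sub_len len ed = 0.
  by apply/rowP => j; apply/eqP; rewrite [X in _ == X]mxE; apply/negbFE/lam0.
rewrite scaler_eq0 invr_eq0 (negbTE r_neq0) -(raddf0 (@embQ n)) (inj_eq (@embQ_inj n)).
by rewrite (negbTE (len_neq0 _)).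
Qed.

Lemma nabla_inr e (j : 'I_r') :
  nabla src tgt len alpha (inr (e, j)) = (k (e, inord j.+1) - k (e, inord j))%:~R.
Proof.
have src_eq ed : (sub_src src tgt ed == inr (e, j) :> sub_vert V E r) = (ed == (e, inord j.+1)).
  case: ed => e' i; rewrite /sub_src chain_pt_eq_inr xpair_eqE -val_eqE /= inordK //.
  exact: ltn_ord.
have tgt_eq ed : (sub_tgt src tgt ed == inr (e, j) :> sub_vert V E r) = (ed == (e, inord j)).
  case: ed => e' i; rewrite /sub_tgt chain_pt_eq_inr xpair_eqE eqSS -val_eqE /= inordK //.
  exact: ltnW (ltn_ord j).
rewrite /nabla (eq_bigl _ _ src_eq) (eq_bigl _ _ tgt_eq) !big_pred1_eq.
by rewrite !edge_slopeE rmorphB.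
Qed.

Lemma alpha_chain_telescope e :
  alpha (inl (tgt e)) - alpha (inl (src e)) =
  (\sum_(i < r) k (e, i))%:~R *: (r%:R^-1 *: embQ (len e)).
Proof.
rewrite -(chain_pt_last e) -[inl (src e)]/(chain e 0).
rewrite -(telescope_sumr (fun i => alpha (chain e i)) (leq0n r)) big_mkord.
by rewrite rmorph_sum scaler_suml; apply: eq_bigr => i _; apply: (alpha_slopes (e, i)).
Qed.

Hypothesis nabla_interior_dvd : forall e (j : 'I_r'),
  exists d : int, nabla src tgt len alpha (inr (e, j)) = (r%:Z * d)%:~R.

Lemma alpha_edge_increment e :
  exists t : int, alpha (inl (tgt e)) - alpha (inl (src e)) = embQ (len e *~ t).
Proof.
have /dvdzP[t sum_k] : (r %| \sum_(i < r) k (e, i))%Z.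
  rewrite (eq_bigr (fun i : 'I_r => k (e, inord i))) => [|i _]; last by rewrite inord_val.
  apply: (@dvdz_sum_congr_steps r (fun i => k (e, inord i))) => i lt_ir.
  have [d] := nabla_interior_dvd e (Ordinal (lt_ir : (i < r')%N)).
  by rewrite nabla_inr => /intr_inj ->; rewrite dvdz_mulr.
exists t; rewrite alpha_chain_telescope sum_k embQMz scalerA rmorphM /=.
by rewrite -mulrA mulfV ?mulr1 // r_neq0.
Qed.

End Slopes.

Definition extend_to_chains {G : Type} (g : V -> G) (w : sub_vert V E r) : G :=
  match w with inl v => g v | inr (e, _) => g (tgt e) end.

Lemma extend_to_chains_succ {G : Type} (g : V -> G) e i :
  extend_to_chains g (chain e i.+1) = g (tgt e).
Proof. by rewrite /=; case: insub => [[]|]. Qed.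

Lemma is_PL_extend_to_chains (M : 'rV[int]_n -> Prop) (a : V -> 'rV[rat]_n) :
  (forall v, in_Mgp M (a v)) ->
  (forall e, exists t : int, a (tgt e) - a (src e) = embQ (len e *~ t)) ->
  is_PL M src tgt len (extend_to_chains (fun v => r%:R^-1 *: a v)).
Proof.
move=> a_in incr; split=> [[v|[e j]] /=|[e [[|i] lt_ir]]].
1,2: by rewrite /in_Mr_gp scalerKV ?r_neq0 //; apply: a_in.
- have [t incr_t] := incr e; exists t.
  by rewrite /sub_tgt extend_to_chains_succ -scalerBr incr_t embQMz scalerA mulrC -scalerA.
- by exists 0; rewrite /sub_src /sub_tgt !extend_to_chains_succ subrr scale0r.
Qed.

End SubdividedGraph.

Theorem mainTheorem10 (n : nat) (M : 'rV[int]_n -> Prop)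
  (V E : finType) (src tgt : E -> V) (len : E -> 'rV[int]_n) (r : nat)
  (delta D : sub_vert V E r -> int) (alpha : sub_vert V E r -> 'rV[rat]_n) :
  fs_sharp_monoid M ->
  graph_connected src tgt ->
  (forall e, M (len e) /\ len e <> 0) ->
  (0 < r)%N ->
  (forall (e : E) (j : 'I_r.-1), delta (inr (e, j)) = 0) ->
  is_PL M src tgt len alpha ->
  (forall v, ((r%:Z * D v)%R)%:~R = (delta v)%:~R + nabla src tgt len alpha v) ->
  exists beta : sub_vert V E r -> 'rV[rat]_n,
    is_PL M src tgt len beta /\
    exists c : 'rV[rat]_n, forall v : V, alpha (inl v) + r%:R *: beta (inl v) = c.
Proof.
case: r delta D alpha => [//|r'] delta D alpha [[M_sub _] _ _] connected len_M _
  delta_interior PL_alpha rD_eq.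
have [_ /fin_all_exists[k alpha_slopes]] := PL_alpha.
have len_neq0 e : len e != 0 by apply/eqP; case: (len_M e).
have nabla_dvd e j : exists d : int, nabla src tgt len alpha (inr (e, j)) = (r'.+1%:Z * d)%:~R.
  by exists (D (inr (e, j))); rewrite rD_eq delta_interior add0r.
have incr := alpha_edge_increment alpha_slopes len_neq0 nabla_dvd.
have alpha_diff :=
  connected_diff_in_Mgp (a := alpha \o inl) M_sub (fun e => (len_M e).1) connected incr.
have [v0 _|V0] := pickP (fun _ : V => true); last first.
  by exists alpha; split=> //; exists 0 => v; have := V0 v.
pose a v := alpha (inl v0) - alpha (inl v).
exists (extend_to_chains tgt (fun v => r'.+1%:R^-1 *: a v)); split.
  apply: is_PL_extend_to_chains => [v|e]; first exact: alpha_diff.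
  have [t incr_t] := incr e; exists (- t).
  by rewrite /a opprB addrC addrA subrK -opprB incr_t mulrNz raddfN.
by exists (alpha (inl v0)) => v /=; rewrite scalerKV ?r_neq0 // addrC subrK.
Qed.
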